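(* If $G=(V,E)$ is a finite bipartite graph, then with $\mathbf{x}(z)$ defined from the LABP limits as below, $$\lim_{z\to\infty}\sum_{e\in E}x_e(z)=\nu(G)=\tau(G),$$ i.e. LABP computes the matching number, which equals the vertex cover number.
   Context: $\vec E$ denotes the directed edges of $G$, $\partial u$ the neighbours of $u$, empty sums are $0$. LABP: $m^0_{\vec e}(z)=0$, $m^{t+1}_{u\to v}(z)=z/(1+\sum_{w\in\partial u\setminus v}m^t_{w\to u}(z))$; $Y_{\vec e}(z)=\lim_t m^t_{\vec e}(z)$; $x_e(z)=Y_{\vec e}(z)Y_{-\vec e}(z)/(z+Y_{\vec e}(z)Y_{-\vec e}(z))$ for either orientation $\vec e$ of $e$. $\nu(G)$ is the maximum size of a matching and $\tau(G)$ the minimum size of a vertex cover. *)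

From mathcomp Require Import all_boot.
From Stdlib Require Import Reals.
Set Implicit Arguments. Unset Strict Implicit. Unset Printing Implicit Defensive.

Definition simple_graph (V : finType) (E : {set {set V}}) : Prop :=
  forall e, e \in E -> #|e| = 2.

Definition bipartite (V : finType) (E : {set {set V}}) : Prop :=
  exists A : {set V}, forall e, e \in E -> #|e :&: A| = 1.

Definition nbr (V : finType) (E : {set {set V}}) (u : V) : {set V} :=
  [set w | [set u; w] \in E].

Fixpoint labp (V : finType) (E : {set {set V}}) (z : R) (t : nat) (u v : V) : R :=
  match t with
  | O => 0%R
  | S t' => (z / (1 + \big[Rplus/0%R]_(w in nbr E u :\ v) labp E z t' w u))%R
  end.

(* x_e(z) computed from the limits Y (Y u v z = Y_{u->v}(z)), using one
   orientation of e (the formula is symmetric in the orientation). *)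
Definition xval (V : finType) (Y : V -> V -> R -> R) (z : R) (e : {set V}) : R :=
  match [pick u in e] with
  | Some u =>
      match [pick v in e :\ u] with
      | Some v => (Y u v z * Y v u z / (z + Y u v z * Y v u z))%R
      | None => 0%R
      end
  | None => 0%R
  end.

Definition is_matching (V : finType) (E M : {set {set V}}) : bool :=
  (M \subset E) &&
  [forall e1 in M, forall e2 in M, (e1 != e2) ==> [disjoint e1 & e2]].

Definition is_vertex_cover (V : finType) (E : {set {set V}}) (C : {set V}) : bool :=
  [forall e in E, ~~ [disjoint e & C]].

Definition nu (V : finType) (E : {set {set V}}) : nat :=
  \max_(M : {set {set V}} | is_matching E M) #|M|.

(* vertex cover number tau(G): minimum size of a vertex cover
   (the whole vertex set is a cover, so #|V| is a valid initial bound) *)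
Definition tau (V : finType) (E : {set {set V}}) : nat :=
  \big[minn/#|V|]_(C : {set V} | is_vertex_cover E C) #|C|.

From HB Require Import structures.
From mathcomp Require Import all_boot.
From Stdlib Require Import Reals Lra Lia.
From mathcomp Require Import zify.
Set Implicit Arguments. Unset Strict Implicit. Unset Printing Implicit Defensive.

(* Fix z > 0 and let Y_{u->v} be the limits of the LABP messages.  Passing
   to the limit in the recursion shows that Y is a fixed point, and from the
   fixed-point equations one reads off q_u = 1 / (1 + sum_{w in du} Y_{w->u})
   and the edge values x_e, which satisfy
     0 < q_u <= 1,  0 < x_e < 1,  x_uv (1 - x_uv) = z q_u q_v,
     sum_{v in du} x_uv = 1 - q_u.
   Any such family x is a fractional matching, so sum_e x_e <= |C| for every
   vertex cover C; and a double-counting argument on logarithms gives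
   (|M| - sum_e x_e) ln z <= |E| + |V| for every matching M.  Hence
       nu - (|E| + |V|) / ln z  <=  sum_e x_e(z)  <=  tau.
   For bipartite graphs Koenig's theorem (proved below from the deficiency
   version of Hall's theorem) gives tau <= nu; the sandwich then forces
   nu = tau and sum_e x_e(z) -> nu as z -> oo. *)

Lemma Rplus_left_id : left_id 0%R Rplus. Proof. exact: Rplus_0_l. Qed.
Lemma Rplus_assoc_law : associative Rplus.
Proof. by move=> x y z; rewrite Rplus_assoc. Qed.
HB.instance Definition _ :=
  Monoid.isComLaw.Build R 0%R Rplus Rplus_assoc_law Rplus_comm Rplus_left_id.

(* tau is an iterated minn; bigD1 needs minn as a commutative law. *)
HB.instance Definition _ := SemiGroup.isComLaw.Build nat minn minnA minnC.

Section RealSums.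
Local Open Scope R_scope.
Variables (I : Type) (r : seq I) (P : pred I).

Lemma sumR_le (F G : I -> R) : (forall i, P i -> F i <= G i) ->
  \big[Rplus/0]_(i <- r | P i) F i <= \big[Rplus/0]_(i <- r | P i) G i.
Proof. by move=> H; apply: (big_ind2 (fun a b => a <= b)) => // *; lra. Qed.

Lemma sumR_ge0 (F : I -> R) : (forall i, P i -> 0 <= F i) ->
  0 <= \big[Rplus/0]_(i <- r | P i) F i.
Proof. by move=> H; apply: (big_ind (fun a => 0 <= a)) => // *; lra. Qed.

Lemma sumR_mull (F : I -> R) c :
  \big[Rplus/0]_(i <- r | P i) (c * F i) = c * \big[Rplus/0]_(i <- r | P i) F i.
Proof.
by apply: (big_ind2 (fun a b => a = c * b)) => [| ? ? ? ? -> -> |] //; lra.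
Qed.

Lemma sumR_sub (F G : I -> R) :
  \big[Rplus/0]_(i <- r | P i) (F i - G i) =
  \big[Rplus/0]_(i <- r | P i) F i - \big[Rplus/0]_(i <- r | P i) G i.
Proof.
apply: (big_ind3 (fun a b c => a = b - c)) => [| ? ? ? ? ? ? -> -> |] //; lra.
Qed.

Lemma sumR_cv (F : nat -> I -> R) (L : I -> R) :
  (forall i, P i -> Un_cv (fun t => F t i) (L i)) ->
  Un_cv (fun t => \big[Rplus/0]_(i <- r | P i) F t i)
        (\big[Rplus/0]_(i <- r | P i) L i).
Proof.
move=> H; elim: r => [|a s IH].
  rewrite big_nil => e he; exists 0%nat => n _.
  by rewrite big_nil /R_dist Rminus_0_r Rabs_R0.
rewrite big_cons; case Pa: (P a).
  apply: Un_cv_ext (CV_plus _ _ _ _ (H a Pa) IH) => n.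
  by rewrite big_cons Pa.
by apply: Un_cv_ext IH => n; rewrite big_cons Pa.
Qed.

End RealSums.

Lemma sumR_const (T : finType) (A : {pred T}) (c : R) :
  \big[Rplus/0%R]_(i in A) c = (INR #|A| * c)%R.
Proof.
rewrite big_const; elim: #|A| => [|n IH]; first by rewrite /=; lra.
rewrite [iter _ _ _]/= IH S_INR; lra.
Qed.

Section SimpleGraph.
Variables (V : finType) (E : {set {set V}}) (Hs : simple_graph E).

Lemma edge_neq u v : [set u; v] \in E -> u != v.
Proof. by move=> /Hs; apply: contra_eqN => /eqP ->; rewrite setUid cards1. Qed.

Lemma nbr_neq u v : v \in nbr E u -> u != v.
Proof. by rewrite inE; exact: edge_neq. Qed.

Lemma edge_at e u : e \in E -> u \in e ->
  exists2 v, v \in nbr E u & e = [set u; v].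
Proof.
move=> eE ue; have /cards2P [a [b [ab ee]]] : #|e| == 2 by rewrite Hs.
move: ue; rewrite ee !inE => /orP [] /eqP ->.
  by exists b; rewrite // inE -ee.
by exists a; rewrite ?inE setUC // -ee.
Qed.

Lemma nbr_inj u : {in nbr E u &, injective (fun v => [set u; v])}.
Proof.
move=> v w vn wn /= eq.
have : v \in [set u; w] by rewrite -eq !inE eqxx orbT.
rewrite !inE => /orP [] /eqP // vu.
by move: (nbr_neq vn); rewrite vu eqxx.
Qed.

Lemma double_count (C : {set V}) (G : V -> {set V} -> R) :
  \big[Rplus/0%R]_(e in E) \big[Rplus/0%R]_(u in e :&: C) G u e =
  \big[Rplus/0%R]_(u in C) \big[Rplus/0%R]_(v in nbr E u) G u [set u; v].
Proof.
rewrite (exchange_big_dep (fun u => u \in C)) /=; last first.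
  by move=> e u _; rewrite inE => /andP [].
apply: eq_bigr => u uC; rewrite -(big_imset (G u) (@nbr_inj u)) /=.
have -> : [set [set u; v] | v in nbr E u] = [set e in E | u \in e].
  apply/setP => e; rewrite inE; apply/imsetP/andP => [[v vn ->] | [eE ue]].
    by move: vn; rewrite !inE eqxx.
  by have [v vn ->] := edge_at eE ue; exists v.
apply: eq_bigl => e.
by rewrite !inE uC andbT.
Qed.

(* Each edge is counted once from each of its two endpoints. *)
Lemma count_edges_twice (G : {set V} -> R) :
  (2 * \big[Rplus/0]_(e in E) G e =
   \big[Rplus/0]_(u in [set: V]) \big[Rplus/0]_(v in nbr E u) G [set u; v])%R.
Proof.
rewrite -(double_count [set: V] (fun u e => G e)) -sumR_mull.
by apply: eq_bigr => e eE; rewrite sumR_const setIT Hs //=; lra.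
Qed.

Lemma edge_vertex_exchange (c : {set V} -> R) (f : V -> R) :
  \big[Rplus/0%R]_(e in E) (c e * \big[Rplus/0%R]_(u in e) f u)%R =
  \big[Rplus/0%R]_(u in [set: V])
     (f u * \big[Rplus/0%R]_(v in nbr E u) c [set u; v])%R.
Proof.
transitivity (\big[Rplus/0%R]_(e in E)
  \big[Rplus/0%R]_(u in e :&: [set: V]) (c e * f u)%R).
  by apply: eq_bigr => e _; rewrite setIT sumR_mull.
rewrite (double_count [set: V] (fun u e => c e * f u)%R).
by apply: eq_bigr => u _; rewrite -sumR_mull; apply: eq_bigr => v _; lra.
Qed.

End SimpleGraph.

Lemma simple_graph_sub (V : finType) (E F : {set {set V}}) :
  simple_graph E -> F \subset E -> simple_graph F.
Proof. by move=> Hs /subsetP sFE e /sFE /Hs. Qed.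

Section Logarithms.
Local Open Scope R_scope.

Lemma ln_le_mono a b : 0 < a -> a <= b -> ln a <= ln b.
Proof.
move=> ha /Rle_lt_or_eq_dec [hab|->]; last lra.
exact/Rlt_le/ln_increasing.
Qed.

Lemma ln_le0 a : 0 < a -> a <= 1 -> ln a <= 0.
Proof. by move=> ha h1; rewrite -ln_1; exact: ln_le_mono. Qed.

(* a ln a >= -1 (indeed >= -1/e), from 1 + t <= exp t at t = - ln a. *)
Lemma xlnx_ge a : 0 < a -> -1 <= a * ln a.
Proof.
move=> ha; have := exp_ineq1_le (- ln a); rewrite exp_Ropp exp_ln // => h.
have : a * (1 + - ln a) <= a * / a by apply: Rmult_le_compat_l; lra.
rewrite Rinv_r; [nra | lra].
Qed.

Lemma ln_one_minus_sum (I : Type) (r : seq I) (P : pred I) (f : I -> R) :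
  (forall i, P i -> 0 <= f i) ->
  \big[Rplus/0]_(i <- r | P i) f i < 1 ->
  ln (1 - \big[Rplus/0]_(i <- r | P i) f i) <=
  \big[Rplus/0]_(i <- r | P i) ln (1 - f i).
Proof.
pose inv l s := 0 <= s /\ (s < 1 -> ln (1 - s) <= l).
move=> f_ge0; suff [_ ] : inv (\big[Rplus/0]_(i <- r | P i) ln (1 - f i))
                             (\big[Rplus/0]_(i <- r | P i) f i) by [].
apply: (big_ind2 inv) => [|l1 s1 l2 s2 [s1_ge0 h1] [s2_ge0 h2]|i Pi].
- by split=> [|_]; rewrite ?Rminus_0_r ?ln_1; lra.
- split=> [|hs]; first lra.
  have := h1 ltac:(lra); have := h2 ltac:(lra).
  have : ln (1 - (s1 + s2)) <= ln ((1 - s1) * (1 - s2)) by apply: ln_le_mono; nra.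
  rewrite ln_mult; lra.
- by split=> [|_]; [exact: f_ge0 | lra].
Qed.

End Logarithms.

Lemma matching_degree_le1 (V : finType) (E M : {set {set V}}) u :
  simple_graph E -> is_matching E M -> (#|nbr M u| <= 1)%N.
Proof.
move=> Hs /andP [sME /forall_inP hM]; have HM := simple_graph_sub Hs sME.
apply/card_le1_eqP => p p' pn p'n; apply/eqP/negPn/negP => pp.
have ne : [set u; p] != [set u; p'].
  by apply: contra pp => /eqP h; apply/eqP/esym; exact: (nbr_inj HM pn p'n h).
move: pn p'n; rewrite !inE => pM p'M.
move: (hM _ pM) => /forall_inP /(_ _ p'M); rewrite ne /=.
by move/disjointFr => /(_ u); rewrite !inE !eqxx => /(_ isT).
Qed.

(* The two bounds hold for any family (q, x) satisfying the identities that
   the LABP fixed point produces: x is a fractional matching saturating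
   vertex u up to q_u, and x_uv (1 - x_uv) = z q_u q_v on every edge. *)
Section FractionalBounds.
Local Open Scope R_scope.
Variables (V : finType) (E : {set {set V}}) (Hs : simple_graph E).
Variables (z : R) (q : V -> R) (x : {set V} -> R).
Hypothesis z_gt0 : 0 < z.
Hypothesis q_range : forall u, 0 < q u <= 1.
Hypothesis x_range : forall e, e \in E -> 0 < x e < 1.
Hypothesis x_edge : forall u v, [set u; v] \in E ->
  x [set u; v] * (1 - x [set u; v]) = z * q u * q v.
Hypothesis x_vertex : forall u,
  \big[Rplus/0]_(v in nbr E u) x [set u; v] = 1 - q u.

(* Weak duality: each edge meets the cover, each vertex carries weight <= 1. *)
Lemma cover_bound (C : {set V}) : is_vertex_cover E C ->
  \big[Rplus/0]_(e in E) x e <= INR #|C|.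
Proof.
move=> /forall_inP hC.
apply: Rle_trans (_ : \big[Rplus/0]_(e in E)
                        \big[Rplus/0]_(u in e :&: C) x e <= _).
  apply: sumR_le => e eE; rewrite sumR_const.
  have : 1 <= INR #|e :&: C|.
    by apply: (le_INR 1); apply/leP; rewrite card_gt0 setI_eq0; exact: hC.
  have := x_range eE; nra.
rewrite (double_count Hs C (fun u e => x e)) -[INR #|C|]Rmult_1_r -sumR_const.
by apply: sumR_le => u _; rewrite x_vertex; have := q_range u; lra.
Qed.

Lemma edge_log e : e \in E ->
  \big[Rplus/0]_(u in e) ln (q u) = ln (x e) + ln (1 - x e) - ln z.
Proof.
move=> eE; have /cards2P [a [b [ab ee]]] : (#|e| == 2)%nat by rewrite Hs.
rewrite ee big_setU1 ?inE // big_set1.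
have := x_range eE; have := q_range a; have := q_range b.
have := @x_edge a b; rewrite -ee => /(_ eE) hab ha hb hx.
have : ln (x e * (1 - x e)) = ln (z * q a * q b) by rewrite hab.
rewrite !ln_mult /=; try nra; lra.
Qed.

Lemma log_identity (F : {set {set V}}) (c : {set V} -> R) : F \subset E ->
  (\big[Rplus/0]_(e in F) c e) * ln z =
  \big[Rplus/0]_(e in F) (c e * (ln (x e) + ln (1 - x e))) -
  \big[Rplus/0]_(e in F) (c e * \big[Rplus/0]_(u in e) ln (q u)).
Proof.
move=> /subsetP sFE; rewrite Rmult_comm -sumR_mull -sumR_sub.
by apply: eq_bigr => e /sFE eE; rewrite edge_log //; ring.
Qed.

(* Around u, the weights of any set A of incident edges sum to < 1. *)
Lemma vertex_log_bound u (A : {set V}) : A \subset nbr E u ->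
  ln (1 - \big[Rplus/0]_(v in A) x [set u; v]) <=
  \big[Rplus/0]_(v in A) ln (1 - x [set u; v]).
Proof.
move=> /subsetP sA; have pos v : v \in A -> 0 < x [set u; v] < 1.
  by move=> /sA; rewrite inE => /x_range.
apply: ln_one_minus_sum => [v /pos|]; first lra.
have := x_vertex u; rewrite (big_setID A) (setIidPr (introT subsetP sA)) /=.
have := q_range u; have : 0 <= \big[Rplus/0]_(v in nbr E u :\: A) x [set u; v].
  by apply: sumR_ge0 => v; rewrite inE => /andP [_]; rewrite inE => /x_range; lra.
lra.
Qed.

Lemma vertex_bound (M : {set {set V}}) u : is_matching E M ->
  (1 - INR #|nbr M u|) * ln (q u) <=
  \big[Rplus/0]_(v in nbr E u) ln (1 - x [set u; v]) -
  \big[Rplus/0]_(v in nbr M u) (ln (x [set u; v]) + ln (1 - x [set u; v])).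
Proof.
move=> mM; have := matching_degree_le1 u Hs mM; have /andP [sME _] := mM.
have sub : nbr M u \subset nbr E u.
  by apply/subsetP => v; rewrite !inE => /(subsetP sME).
rewrite leq_eqVlt ltnS leqn0 => /orP [/cards1P [p hp] | /eqP/cards0_eq ->].
- rewrite hp big_set1 cards1 /= Rminus_diag Rmult_0_l.
  have pE : p \in nbr E u by apply: (subsetP sub); rewrite hp inE.
  rewrite (big_setD1 _ pE) /=.
  have := x_vertex u; rewrite (big_setD1 _ pE) /= => hs.
  have := vertex_log_bound (subsetDl (nbr E u) [set p]).
  have : ln (x [set u; p]) <=
         ln (1 - \big[Rplus/0]_(v in nbr E u :\ p) x [set u; v]).
    have := q_range u; move: pE; rewrite inE => /x_range.
    by move=> hx hq; apply: ln_le_mono; lra.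
  lra.
- rewrite big_set0 cards0 /=.
  have := vertex_log_bound (subxx (nbr E u)); rewrite x_vertex.
  have -> : 1 - (1 - q u) = q u by ring.
  lra.
Qed.

(* Pointwise, x ln x >= -1 and x ln (1 - x) >= ln (1 - x). *)
Lemma edge_entropy_bound :
  - INR #|E| + \big[Rplus/0]_(e in E) ln (1 - x e) <=
  \big[Rplus/0]_(e in E) (x e * (ln (x e) + ln (1 - x e))).
Proof.
suff : \big[Rplus/0]_(e in E) (-1 + ln (1 - x e)) <=
       \big[Rplus/0]_(e in E) (x e * (ln (x e) + ln (1 - x e))).
  by rewrite big_split sumR_const /=; lra.
apply: sumR_le => e eE; have := x_range eE => hx.
have := xlnx_ge (proj1 hx); have := ln_le0 (a := 1 - x e) ltac:(lra) ltac:(lra).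
nra.
Qed.

Lemma vertex_term_le1 (M : {set {set V}}) u : is_matching E M ->
  ln (q u) * (1 - q u) - ln (q u) * INR #|nbr M u| -
  / 2 * (\big[Rplus/0]_(v in nbr E u) ln (1 - x [set u; v]) -
         \big[Rplus/0]_(v in nbr M u) (ln (x [set u; v]) + ln (1 - x [set u; v])))
  <= 1.
Proof.
move=> mM; have hv := vertex_bound u mM.
have hk : INR #|nbr M u| <= 1.
  by apply: (le_INR _ 1); apply/leP; exact: matching_degree_le1 Hs mM.
have hk0 := pos_INR #|nbr M u|; have hq := q_range u.
have := ln_le0 (proj1 hq) (proj2 hq); have := xlnx_ge (proj1 hq).
nra.
Qed.

Lemma matching_bound (M : {set {set V}}) : is_matching E M ->
  (INR #|M| - \big[Rplus/0]_(e in E) x e) * ln z <= INR #|E| + INR #|V|.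
Proof.
move=> mM; have /andP [sME _] := mM; have HM := simple_graph_sub Hs sME.
have := log_identity x (subxx E); rewrite (edge_vertex_exchange Hs).
under [X in _ = _ - X]eq_bigr => u _ do rewrite x_vertex.
move=> hX.
have := log_identity (fun => 1) sME; rewrite (edge_vertex_exchange HM).
rewrite sumR_const Rmult_1_r.
under eq_bigr => e _ do rewrite Rmult_1_l.
under [X in _ = _ - X]eq_bigr => u _ do rewrite sumR_const Rmult_1_r.
move=> hM.
have h2E := count_edges_twice Hs (fun e => ln (1 - x e)).
have h2M := count_edges_twice HM (fun e => ln (x e) + ln (1 - x e)).
(* What remains is a sum of per-vertex terms, each at most 1. *)
have hV : \big[Rplus/0]_(u in [set: V])
    (ln (q u) * (1 - q u) - ln (q u) * INR #|nbr M u| -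
     / 2 * (\big[Rplus/0]_(v in nbr E u) ln (1 - x [set u; v]) -
            \big[Rplus/0]_(v in nbr M u) (ln (x [set u; v]) + ln (1 - x [set u; v]))))
    <= INR #|[set: V]| * 1.
  by rewrite -sumR_const; apply: sumR_le => u _; exact: vertex_term_le1.
rewrite cardsT !sumR_sub sumR_mull sumR_sub -h2E -h2M in hV.
have := edge_entropy_bound; rewrite Rmult_minus_distr_r hX hM; lra.
Qed.

End FractionalBounds.

Section Limits.
Local Open Scope R_scope.

Lemma cv_ge0 (u : nat -> R) l : Un_cv u l -> (forall n, 0 <= u n) -> 0 <= l.
Proof.
move=> h hp; apply: Rnot_lt_le => hl; case: (h (- l) ltac:(lra)) => N hN.
have := hN N (le_n N); rewrite /R_dist => /Rabs_def2 [h1 h2].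
have := hp N; lra.
Qed.

Lemma cv_shift (u : nat -> R) l : Un_cv u l -> Un_cv (fun n => u (S n)) l.
Proof. by move=> h e he; case: (h e he) => N hN; exists N => n hn; apply: hN; lia. Qed.

Lemma cv_const c : Un_cv (fun _ => c) c.
Proof. by move=> e he; exists 0%nat => n _; rewrite /R_dist Rminus_diag Rabs_R0. Qed.

End Limits.

(* For a pair of opposite messages a = Y_{u->v}, b = Y_{v->u} satisfying the
   fixed-point equations with S, T the incoming sums at u, v, the edge value
   x = ab / (z + ab) equals b / (1 + S), lies in (0,1) and satisfies
   x (1 - x) = z / ((1 + S)(1 + T)). *)
Lemma edge_value_algebra (a b S T z : R) : (0 < z -> 0 <= a -> 0 <= b ->
  0 <= S - b -> 0 <= T - a -> a * (1 + S - b) = z -> b * (1 + T - a) = z ->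
  let x := a * b / (z + a * b) in
  x = b * / (1 + S) /\ 0 < x < 1 /\ x * (1 - x) = z * / (1 + S) * / (1 + T))%R.
Proof.
move=> hz ha hb hS hT h1 h2 x.
have a0 : (0 < a)%R by nra.
have b0 : (0 < b)%R by nra.
have ex : x = (b * / (1 + S))%R by rewrite /x -h1; field; repeat split; nra.
split => //; rewrite ex; split.
  split; first by apply: Rmult_lt_0_compat; [lra | apply: Rinv_0_lt_compat; lra].
  by apply: (Rmult_lt_reg_r (1 + S)); [lra | rewrite Rmult_assoc Rinv_l; lra].
have key : (b * (1 + S - b) * (1 + T) = z * (1 + S))%R.
  have e2 : (b * (1 + T) = z + a * b)%R by nra.
  have -> : (b * (1 + S - b) * (1 + T) = (1 + S - b) * (b * (1 + T)))%R by ring.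
  rewrite e2; nra.
by field_simplify_eq; lra.
Qed.

Lemma labp_ge0 (V : finType) (E : {set {set V}}) (z : R) : (0 <= z)%R ->
  forall t u v, (0 <= labp E z t u v)%R.
Proof.
move=> hz; elim => [|t IH] u v /=; first lra.
have : (0 <= \big[Rplus/0]_(w in nbr E u :\ v) labp E z t w u)%R.
  by apply: sumR_ge0 => w _; exact: IH.
move=> h; apply: Rmult_le_pos => //; apply/Rlt_le/Rinv_0_lt_compat; lra.
Qed.

Section LABPFixedPoint.
Local Open Scope R_scope.
Variables (V : finType) (E : {set {set V}}) (Hs : simple_graph E).
Variables (Y : V -> V -> R -> R) (z : R).
Hypothesis z_gt0 : 0 < z.
Hypothesis HY : forall u v, [set u; v] \in E ->
  Un_cv (fun t => labp E z t u v) (Y u v z).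

Lemma edge_sym u v : [set u; v] \in E -> [set v; u] \in E.
Proof. by rewrite setUC. Qed.

Lemma Y_ge0 u v : [set u; v] \in E -> 0 <= Y u v z.
Proof. by move=> uv; apply: cv_ge0 (HY uv) _ => n; apply: labp_ge0; lra. Qed.

Lemma labp_fixed_point u v : [set u; v] \in E ->
  Y u v z * (1 + \big[Rplus/0]_(w in nbr E u :\ v) Y w u z) = z.
Proof.
move=> uv.
have cv_in : Un_cv (fun t => \big[Rplus/0]_(w in nbr E u :\ v) labp E z t w u)
                   (\big[Rplus/0]_(w in nbr E u :\ v) Y w u z).
  by apply: sumR_cv => w; rewrite !inE => /andP [_ /edge_sym]; exact: HY.
have := CV_mult _ _ _ _ (cv_shift (HY uv)) (CV_plus _ _ _ _ (cv_const 1) cv_in).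
move/UL_sequence; apply; apply: Un_cv_ext (cv_const z) => n /=.
have : 0 <= \big[Rplus/0]_(w in nbr E u :\ v) labp E z n w u.
  by apply: sumR_ge0 => w _; apply: labp_ge0; lra.
by move=> h; field; lra.
Qed.

Definition sY u := \big[Rplus/0]_(w in nbr E u) Y w u z.
Definition qY u := / (1 + sY u).

Lemma sY_ge0 u : 0 <= sY u.
Proof. by apply: sumR_ge0 => w; rewrite inE => /edge_sym /Y_ge0. Qed.

Lemma qY_range u : 0 < qY u <= 1.
Proof.
have := sY_ge0 u; rewrite /qY => h; split; first by apply: Rinv_0_lt_compat; lra.
by apply: (Rmult_le_reg_r (1 + sY u)); [lra | rewrite Rinv_l; lra].
Qed.

Lemma edge_fixed_point u v : [set u; v] \in E ->
  Y u v z * (1 + sY u - Y v u z) = z /\ 0 <= sY u - Y v u z.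
Proof.
move=> uv; have vn : v \in nbr E u by rewrite inE.
rewrite /sY (big_setD1 _ vn) /=; split.
  have -> : 1 + (Y v u z + \big[Rplus/0]_(w in nbr E u :\ v) Y w u z) - Y v u z
          = 1 + \big[Rplus/0]_(w in nbr E u :\ v) Y w u z by ring.
  exact: labp_fixed_point.
have : 0 <= \big[Rplus/0]_(w in nbr E u :\ v) Y w u z.
  by apply: sumR_ge0 => w; rewrite !inE => /andP [_ /edge_sym /Y_ge0].
lra.
Qed.

Lemma xval_edge u v : u != v ->
  xval Y z [set u; v] = Y u v z * Y v u z / (z + Y u v z * Y v u z).
Proof.
move=> uv; rewrite /xval; case: pickP => [u' | ]; last by move/(_ u); rewrite !inE eqxx.
rewrite !inE => /orP [] /eqP ->; case: pickP => [v' | ].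
- rewrite !inE => /andP [v'u /orP [] /eqP v'e]; first by rewrite v'e eqxx in v'u.
  by rewrite v'e.
- by move/(_ v); rewrite !inE eqxx orbT eq_sym uv.
- rewrite !inE => /andP [v'u /orP [] /eqP v'e]; last by rewrite v'e eqxx in v'u.
  by rewrite v'e Rmult_comm.
- by move/(_ u); rewrite !inE eqxx uv.
Qed.

Lemma xval_props u v : [set u; v] \in E ->
  let x := xval Y z [set u; v] in
  x = Y v u z * qY u /\ 0 < x < 1 /\ x * (1 - x) = z * qY u * qY v.
Proof.
move=> uv; rewrite xval_edge ?(edge_neq Hs uv) //.
have [h1 g1] := edge_fixed_point uv; have [h2 g2] := edge_fixed_point (edge_sym uv).
exact: edge_value_algebra z_gt0 (Y_ge0 uv) (Y_ge0 (edge_sym uv)) g1 g2 h1 h2.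
Qed.

Lemma xval_range e : e \in E -> 0 < xval Y z e < 1.
Proof.
move=> eE; have /cards2P [a [b [ab ee]]] : (#|e| == 2)%nat by rewrite Hs.
by rewrite ee in eE *; have [_ [h _]] := xval_props eE.
Qed.

Lemma xval_vertex_sum u :
  \big[Rplus/0]_(v in nbr E u) xval Y z [set u; v] = 1 - qY u.
Proof.
transitivity (\big[Rplus/0]_(v in nbr E u) (qY u * Y v u z)).
  apply: eq_bigr => v; rewrite inE => /xval_props [-> _].
  exact: Rmult_comm.
by rewrite sumR_mull -/(sY u) /qY; have := sY_ge0 u; move=> h; field; lra.
Qed.

Lemma labp_matching_bound M : is_matching E M ->
  (INR #|M| - \big[Rplus/0]_(e in E) xval Y z e) * ln z <= INR #|E| + INR #|V|.
Proof.
have x_edge u v : [set u; v] \in E -> let x := xval Y z [set u; v] in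
    x * (1 - x) = z * qY u * qY v by move=> /xval_props [_ []].
exact: (matching_bound Hs z_gt0 qY_range xval_range x_edge xval_vertex_sum).
Qed.

Lemma labp_cover_bound C : is_vertex_cover E C ->
  \big[Rplus/0]_(e in E) xval Y z e <= INR #|C|.
Proof. exact: (cover_bound Hs qY_range xval_range xval_vertex_sum). Qed.

End LABPFixedPoint.

Lemma disjoint_setP (T : finType) (A B : {set T}) :
  reflect (forall v, v \in A -> v \in B -> False) [disjoint A & B].
Proof.
rewrite -setI_eq0; apply: (iffP eqP) => [h v va vb | h].
  have : v \in A :&: B by rewrite inE va vb.
  by rewrite h inE.
apply/setP => v; rewrite !inE; apply/negP => /andP [va vb]; exact: h va vb.
Qed.

Lemma setUD_sub (T : finType) (S A : {set T}) : S \subset A -> S :|: A :\: S = A.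
Proof. by move=> sSA; rewrite setDE setUIr setUCr setIT; apply/setUidPr. Qed.

Section Koenig.
Variables (V : finType) (E : {set {set V}}) (Hs : simple_graph E).

Definition nbhd_in (B S : {set V}) :=
  [set v in B | [exists a in S, [set a; v] \in E]].

Definition hall_condition (A B : {set V}) (d : nat) :=
  forall S : {set V}, S \subset A -> (#|S| <= #|nbhd_in B S| + d)%N.

Definition matches_up_to (A B : {set V}) (d : nat) :=
  exists M, [/\ is_matching E M, forall e, e \in M -> e \subset A :|: B
              & (#|A| <= #|M| + d)%N].

Lemma nbhd_in_sub (B S : {set V}) : nbhd_in B S \subset B.
Proof. by apply/subsetP => v; rewrite inE => /andP []. Qed.

Lemma nbhd_in_nbhd (B T S : {set V}) : T \subset S ->
  nbhd_in (nbhd_in B S) T = nbhd_in B T.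
Proof.
move=> /subsetP TS; apply/setP => v; rewrite !inE.
case: (v \in B) => //=; apply/andP/idP => [[_ h] // | h]; split => //.
case/exists_inP: h => a aT ae; apply/exists_inP; exists a => //; exact: TS.
Qed.

Lemma nbhd_inD (B T S : {set V}) : nbhd_in (B :\: S) T = nbhd_in B T :\: S.
Proof. by apply/setP => v; rewrite !inE andbA. Qed.

Lemma nbhd_inU (B T S : {set V}) :
  nbhd_in B (T :|: S) = nbhd_in B T :|: nbhd_in B S.
Proof.
apply/setP => v; rewrite !inE; case: (v \in B) => //=.
apply/exists_inP/orP => [[a] | ].
  by rewrite inE => /orP [] ha ea; [left | right]; apply/exists_inP; exists a.
by case=> /exists_inP [a ha ea]; exists a => //; rewrite inE ha ?orbT.
Qed.

Lemma nbhd_in0 (B : {set V}) : nbhd_in B set0 = set0.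
Proof.
by apply/setP => v; rewrite !inE; apply/negP => /andP [_ /exists_inP [a]]; rewrite inE.
Qed.

Lemma matching0 : is_matching E set0.
Proof. by rewrite /is_matching sub0set; apply/forall_inP => e; rewrite inE. Qed.

Lemma matching1 e : e \in E -> is_matching E [set e].
Proof.
move=> eE; rewrite /is_matching sub1set eE /=.
apply/forall_inP => e1; rewrite inE => /eqP ->; apply/forall_inP => e2.
by rewrite inE => /eqP ->; rewrite eqxx.
Qed.

Lemma matching_union (M1 M2 : {set {set V}}) (X1 X2 : {set V}) :
  is_matching E M1 -> is_matching E M2 ->
  (forall e, e \in M1 -> e \subset X1) -> (forall e, e \in M2 -> e \subset X2) ->
  [disjoint X1 & X2] ->
  is_matching E (M1 :|: M2) /\ #|M1 :|: M2| = (#|M1| + #|M2|)%N.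
Proof.
move=> /andP [s1 /forall_inP h1] /andP [s2 /forall_inP h2] x1 x2 /disjoint_setP dX.
have dis e1 e2 : e1 \in M1 -> e2 \in M2 -> [disjoint e1 & e2].
  move=> e1M e2M; apply/disjoint_setP => v v1 v2.
  by apply: (dX v); [apply: (subsetP (x1 _ e1M)) | apply: (subsetP (x2 _ e2M))].
split.
  rewrite /is_matching subUset s1 s2 /=.
  apply/forall_inP => e1; rewrite inE => /orP [] e1M; apply/forall_inP => e2;
    rewrite inE => /orP [] e2M; apply/implyP => ne.
  - by move: (h1 _ e1M) => /forall_inP /(_ _ e2M) /implyP; apply.
  - exact: dis.
  - by rewrite disjoint_sym; apply: dis.
  - by move: (h2 _ e1M) => /forall_inP /(_ _ e2M) /implyP; apply.
have I0 : M1 :&: M2 = set0.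
  apply/setP => e; rewrite !inE; apply/negP => /andP [e1 e2].
  have /card_gt0P [v ve] : (0 < #|e|)%N by rewrite Hs // (subsetP s1).
  by move/disjoint_setP: (dis _ _ e1 e2) => /(_ v ve ve).
by have := cardsUI M1 M2; rewrite I0 cards0 addn0.
Qed.

Lemma matches_up_toU (A1 B1 A2 B2 : {set V}) (d1 d2 : nat) :
  [disjoint A1 :|: B1 & A2 :|: B2] ->
  matches_up_to A1 B1 d1 -> matches_up_to A2 B2 d2 ->
  matches_up_to (A1 :|: A2) (B1 :|: B2) (d1 + d2).
Proof.
move=> dis [M1 [m1 w1 c1]] [M2 [m2 w2 c2]].
have [mM cM] := matching_union m1 m2 w1 w2 dis.
exists (M1 :|: M2); split => //; last first.
  by rewrite cM; have := cardsUI A1 A2; lia.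
move=> e; rewrite inE => /orP [] /[dup] eM.
  by move/w1/subset_trans; apply; rewrite setUACA subsetUl.
by move/w2/subset_trans; apply; rewrite setUACA subsetUr.
Qed.

Section HallStep.
Variable n : nat.
Hypothesis IH : forall (A B : {set V}) (d : nat), (#|A| <= n)%N -> [disjoint A & B] ->
  hall_condition A B d -> matches_up_to A B d.
Variables (A B : {set V}) (d : nat).
Hypotheses (cardA : #|A| = n.+1) (disAB : [disjoint A & B])
           (hallAB : hall_condition A B d).

(* A nonempty proper subset S of A is tight: split along S and N(S). *)
Lemma hall_tight_step (S : {set V}) : S \proper A -> S != set0 ->
  (#|nbhd_in B S| + d <= #|S|)%N -> matches_up_to A B d.
Proof.
move=> pS nS tS; have sS : S \subset A by case/andP: pS.
have tS' := hallAB sS; set N := nbhd_in B S in tS tS'.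
have := proper_card pS; rewrite cardA ltnS => cS.
have sN : N \subset B by exact: nbhd_in_sub.
have cD : #|A :\: S| = (#|A| - #|S|)%N by rewrite cardsD (setIidPr sS).
have inner : matches_up_to S N d.
  apply: IH => //; first by apply: disjointWl sS (disjointWr sN disAB).
  by move=> T TS; rewrite nbhd_in_nbhd //; apply/hallAB/(subset_trans TS).
have outer : matches_up_to (A :\: S) (B :\: N) 0.
  apply: IH.
  - have : (0 < #|S|)%N by rewrite card_gt0.
    by rewrite cD cardA; lia.
  - by apply: disjointW disAB; exact: subsetDl.
  move=> T TS; rewrite nbhd_inD.
  have TA : T \subset A by apply: subset_trans TS (subsetDl _ _).
  have TSd : [disjoint T & S].
    by apply/disjoint_setP => v /(subsetP TS); rewrite inE => /andP [/negP].
  have := @hallAB (T :|: S); rewrite subUset TA sS nbhd_inU => /(_ isT).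
  rewrite cardsU (disjoint_setI0 TSd) cards0 subn0.
  have := cardsID N (nbhd_in B T :|: N); rewrite setUC setUK setDUl setDv set0U.
  have := leq_card_setU (nbhd_in B T) N; lia.
have := matches_up_toU _ inner outer; rewrite addn0 !setUD_sub //; apply.
move/disjoint_setP: disAB => dAB; apply/disjoint_setP => v.
rewrite !in_setU !in_setD => /orP [vS | vN] /orP [] /andP [h1 h2].
- by rewrite vS in h1.
- exact: dAB (subsetP sS v vS) h2.
- exact: dAB h2 (subsetP sN v vN).
- by rewrite vN in h1.
Qed.

(* Otherwise every nonempty T avoiding some fixed a in A has slack. *)
Section Slack.
Variable a : V.
Hypotheses (aA : a \in A) (slack : forall T : {set V}, T \subset A :\ a ->
  T != set0 -> (#|T| < #|nbhd_in B T| + d)%N).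

(* If a has no neighbour in B, drop a and use one unit of deficiency. *)
Lemma hall_isolated_step : nbhd_in B [set a] = set0 -> matches_up_to A B d.
Proof.
move=> Na0; have := @hallAB [set a].
rewrite sub1set aA Na0 cards0 cards1 => /(_ isT) d1.
have cAa := cardsD1 a A; rewrite aA in cAa.
have [M [mM wM cM]] : matches_up_to (A :\ a) B (d - 1).
  apply: IH; first lia.
    by apply: disjointWl disAB; exact: subsetDl.
  move=> T TA; have [-> | Tn] := eqVneq T set0; first by rewrite cards0.
  by have := slack TA Tn; lia.
exists M; split => //; last lia.
by move=> e /wM /subset_trans; apply; apply: setSU; exact: subsetDl.
Qed.

(* If ab is an edge with b in B, match a with b and recurse on the rest. *)
Lemma hall_edge_step b : b \in B -> [set a; b] \in E -> matches_up_to A B d.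
Proof.
move=> bB abE; have cAa := cardsD1 a A; rewrite aA in cAa.
have rest : matches_up_to (A :\ a) (B :\ b) d.
  apply: IH; first lia.
    by apply: disjointW disAB; exact: subsetDl.
  move=> T TA; have [-> | Tn] := eqVneq T set0; first by rewrite cards0.
  have := slack TA Tn; rewrite nbhd_inD; have := cardsD1 b (nbhd_in B T).
  by case: (b \in nbhd_in B T) => /=; lia.
have ab : matches_up_to [set a] [set b] 0.
  exists [set [set a; b]]; split; [exact: matching1 | | by rewrite !cards1].
  by move=> e; rewrite inE => /eqP ->; rewrite subxx.
have := matches_up_toU _ ab rest; rewrite !setD1K //; apply.
move/disjoint_setP: disAB => dAB; apply/disjoint_setP => v.
rewrite !inE => /orP [] /eqP -> /orP [] /andP [];
  rewrite ?eqxx // => _; [exact: dAB aA | move=> bA; exact: dAB bA bB].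
Qed.

End Slack.

End HallStep.

Lemma hall_deficiency n (A B : {set V}) (d : nat) : (#|A| <= n)%N ->
  [disjoint A & B] -> hall_condition A B d -> matches_up_to A B d.
Proof.
elim: n A B d => [|n IH] A B d cA disAB hallAB.
  exists set0; split; [exact: matching0 | by move=> e; rewrite inE |].
  by move: cA; rewrite leqn0 => /eqP ->.
have [|gtA] := leqP #|A| n; first by move=> ?; exact: IH.
have cardA : #|A| = n.+1 by apply/eqP; rewrite eqn_leq cA gtA.
have [tight | no_tight] := boolP [exists S : {set V},
  [&& S \proper A, S != set0 & (#|nbhd_in B S| + d <= #|S|)%N]].
  case/existsP: tight => S /and3P [pS nS tS].
  exact: (hall_tight_step IH cardA disAB hallAB pS nS tS).
have /card_gt0P [a aA] : (0 < #|A|)%N by rewrite cardA.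
have slack (T : {set V}) : T \subset A :\ a -> T != set0 -> (#|T| < #|nbhd_in B T| + d)%N.
  move=> TA Tn; have pT : T \proper A.
    rewrite properE (subset_trans TA (subsetDl _ _)) /=.
    by apply/negP => /subsetP /(_ a aA) /(subsetP TA); rewrite !inE eqxx.
  by move: no_tight; rewrite negb_exists => /forallP /(_ T); rewrite pT Tn ltnNge.
have [Na0 | [b]] := set_0Vmem (nbhd_in B [set a]).
  exact: (hall_isolated_step IH cardA disAB hallAB aA slack Na0).
rewrite inE => /andP [bB /exists_inP [a']]; rewrite inE => /eqP -> abE.
exact: (hall_edge_step IH cardA disAB aA slack bB abE).
Qed.

(* Choose S in A minimising |A \ S| + |N(S)|; the cover (A \ S) u N(S) has
   that size, and Hall with the corresponding deficiency gives the matching. *)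
Lemma konig : bipartite E ->
  exists C M, [/\ is_vertex_cover E C, is_matching E M & (#|C| <= #|M|)%N].
Proof.
case=> A hA; pose f S := (#|A :\: S| + #|nbhd_in (~: A) S|)%N.
have [S sA Smin] := @arg_minnP _ set0 (fun S => S \subset A) f (sub0set A).
have mA : (f S <= #|A|)%N.
  by have := Smin set0 (sub0set A); rewrite /f setD0 nbhd_in0 cards0 addn0.
have [M [mM _ cM]] : matches_up_to A (~: A) (#|A| - f S).
  apply: (hall_deficiency (leqnn _)).
    by apply/disjoint_setP => v vA; rewrite inE vA.
  move=> T TA; have := Smin T TA; rewrite /f [#|A :\: T|]cardsD (setIidPr TA).
  by have := subset_leq_card TA; lia.
exists ((A :\: S) :|: nbhd_in (~: A) S), M; split => //; last first.
  by have := cardsUI (A :\: S) (nbhd_in (~: A) S); rewrite /f in mA cM *; lia.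
apply/forall_inP => e eE; have /cards1P [a ha] : #|e :&: A| == 1 by rewrite hA.
have : a \in e :&: A by rewrite ha inE.
rewrite inE => /andP [ae aA]; have [b bn ee] := edge_at Hs eE ae.
have bA : b \notin A.
  apply/negP => bA; have : b \in e :&: A by rewrite inE bA ee !inE eqxx orbT.
  by rewrite ha inE => /eqP ba; move: (nbr_neq Hs bn); rewrite ba eqxx.
apply/negP => /disjoint_setP dis; case aS: (a \in S).
  apply: (dis b); first by rewrite ee !inE eqxx orbT.
  rewrite !inE bA /=; apply/orP; right; apply/exists_inP; exists a => //.
  by move: bn; rewrite inE.
by apply: (dis a); rewrite // !inE aS aA.
Qed.

End Koenig.

Section Extremal.
Variables (V : finType) (E : {set {set V}}) (Hs : simple_graph E).

Lemma nu_ge M : is_matching E M -> (#|M| <= nu E)%N.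
Proof. by move=> mM; apply: (leq_bigmax_cond (P := fun M => is_matching E M)). Qed.

Lemma nu_attained : exists2 M, is_matching E M & #|M| = nu E.
Proof.
rewrite /nu; apply: (big_ind (fun n => exists2 M, is_matching E M & #|M| = n)).
- by exists set0; rewrite ?cards0 //; exact: matching0.
- move=> m n [M1 m1 <-] [M2 m2 <-].
  by case: (leqP #|M1| #|M2|) => h; [exists M2 | exists M1];
    rewrite // ?(maxn_idPr h) // (maxn_idPl (ltnW h)).
- by move=> M mM; exists M.
Qed.

Lemma tau_le C : is_vertex_cover E C -> (tau E <= #|C|)%N.
Proof. by move=> cC; rewrite /tau (bigD1 C) //=; exact: geq_minl. Qed.

Lemma cover_setT : is_vertex_cover E [set: V].
Proof.
apply/forall_inP => e eE; have /card_gt0P [v ve] : (0 < #|e|)%N by rewrite Hs.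
by apply/negP => /disjoint_setP /(_ v ve); rewrite inE => /(_ isT).
Qed.

Lemma tau_attained : exists2 C, is_vertex_cover E C & #|C| = tau E.
Proof.
rewrite /tau; apply: (big_ind (fun n => exists2 C, is_vertex_cover E C & #|C| = n)).
- by exists [set: V]; rewrite ?cardsT //; exact: cover_setT.
- move=> m n [C1 c1 <-] [C2 c2 <-].
  by case: (leqP #|C1| #|C2|) => h; [exists C1 | exists C2];
    rewrite // ?(minn_idPl h) // (minn_idPr (ltnW h)).
- by move=> C cC; exists C.
Qed.

End Extremal.

Section Sandwich.
Local Open Scope R_scope.
Variables (S : R -> R) (n t : nat) (K : R).
Hypothesis K_ge0 : 0 <= K.
Hypothesis bounds : forall z, 0 < z -> (INR n - S z) * ln z <= K /\ S z <= INR t.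

Lemma sandwich_le : (n <= t)%nat.
Proof.
have [h1 h2] := bounds (exp_pos (K + 1)); rewrite ln_exp in h1.
have : INR n < INR t + 1 by nra.
by rewrite -S_INR => /INR_lt; lia.
Qed.

Lemma sandwich_limit : n = t ->
  forall eps, eps > 0 -> exists M, forall z, z > M -> Rabs (S z - INR n) < eps.
Proof.
move=> nt eps heps; exists (exp (K / eps)) => z hz.
have z_gt0 : 0 < z by have := exp_pos (K / eps); lra.
have Keps : 0 <= K / eps by apply: Rmult_le_pos; [lra | apply/Rlt_le/Rinv_0_lt_compat].
have lnz : K / eps < ln z.
  by rewrite -[X in X < _]ln_exp; apply: ln_increasing => //; exact: exp_pos.
have : K < eps * ln z.
  have : K / eps * eps < ln z * eps by apply: Rmult_lt_compat_r.
  by rewrite /Rdiv Rmult_assoc Rinv_l; lra.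
have [h1 h2] := bounds z_gt0; rewrite -nt in h2.
by move=> hK; apply: Rabs_def1; nra.
Qed.

End Sandwich.

Theorem mainTheorem4 (V : finType) (E : {set {set V}})
  (Hsimple : simple_graph E) (Hbip : bipartite E)
  (Y : V -> V -> R -> R)
  (HY : forall z : R, (0 < z)%R -> forall u v : V, [set u; v] \in E ->
          Un_cv (fun t => labp E z t u v) (Y u v z)) :
  (forall eps : R, (eps > 0)%R -> exists M : R, forall z : R, (z > M)%R ->
     (Rabs (\big[Rplus/0%R]_(e in E) xval Y z e - INR (nu E)) < eps)%R)
  /\ nu E = tau E.
Proof.
have [M0 mM0 cM0] := nu_attained E.
have [C0 cC0 cC0'] := tau_attained Hsimple.
have K_ge0 : (0 <= INR #|E| + INR #|V|)%R.
  by have := pos_INR #|E|; have := pos_INR #|V|; lra.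
have bounds z : (0 < z)%R ->
    ((INR (nu E) - \big[Rplus/0%R]_(e in E) xval Y z e) * ln z <=
       INR #|E| + INR #|V| /\
     \big[Rplus/0%R]_(e in E) xval Y z e <= INR (tau E))%R.
  move=> z_gt0; rewrite -cM0 -cC0'; split.
    exact: (labp_matching_bound Hsimple z_gt0 (HY z z_gt0) mM0).
  exact: (labp_cover_bound Hsimple z_gt0 (HY z z_gt0) cC0).
have [C [M [cC mM CM]]] := konig Hsimple Hbip.
have tau_le_nu : (tau E <= nu E)%N.
  exact: leq_trans (tau_le cC) (leq_trans CM (nu_ge mM)).
have nu_eq_tau : nu E = tau E.
  by apply/eqP; rewrite eqn_leq (sandwich_le K_ge0 bounds) tau_le_nu.
by split => //; exact: sandwich_limit K_ge0 bounds nu_eq_tau.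
Qed.
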